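(* Let $\mathbb{W}$ be a subgroup of the finite group $\mathbb{W}_1$ that contains the group $\mathbb{W}_1^{\mathfrak{A}}$, and let $G$ be a $\mathbb{W}$-invariant finite subgroup of $\mathbb{T}_1$. Then there exists $n\in\mathbb{N}$ such that one of the following five possibilities holds: \begin{enumerate} \item $G\cong\mu_n^3$; \item $n$ is even and $G\cong\mu_{n}^2\times\mu_{\frac{n}{2}}$; \item $n$ is even and $G\cong\mu_{n}\times\mu_{\frac{n}{2}}^2$; \item $n$ is divisible by $4$ and $G\cong\mu_{n}\times\mu_{\frac{n}{2}}\times\mu_{\frac{n}{4}}$; \item $n$ is divisible by $4$ and $G\cong\mu_{n}\times\mu_{\frac{n}{4}}^2$. \end{enumerate} Here $\mu_k$ denotes the cyclic group of order $k$.
   Context: $M_1=\mathbb{Z}^4/\langle h_1+h_2+h_3+h_4\rangle$, with basis $e_1,e_2,e_3$ the classes of $h_1,h_2,h_3$. The group $\mathfrak{S}_4\times\mu_2$ acts on $M_1$: $\mathfrak{S}_4$ permutes the $h_i$ (so $g(e_i)=e_{g(i)}$ if $g(i)\ne4$ and $-e_1-e_2-e_3$ otherwise) and the generator $\sigma$ of $\mu_2$ acts as $-\mathrm{id}$; the image in $\mathrm{GL}(M_1)\cong\mathrm{GL}_3(\mathbb{Z})$ is denoted $\mathbb{W}_1$, and $\mathbb{W}_1^{\mathfrak{A}}$ is its unique subgroup isomorphic to $\mathfrak{A}_4$ (image of $\mathfrak{A}_4\times\{1\}$). $\mathbb{T}_1=\mathrm{Spec}\,\mathbb{C}[M_1]\cong\mathbb{G}_m^3$,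 on which $\mathrm{GL}(M_1)$ acts by group automorphisms via its action on characters. *)

From HB Require Import structures.
From mathcomp Require Import all_boot all_order all_algebra all_fingroup.
From mathcomp Require Import finmap.
From mathcomp Require Import reals.
From mathcomp Require Import complex.

Set Implicit Arguments.
Unset Strict Implicit.
Unset Printing Implicit Defensive.

Import GRing.Theory Num.Theory.
Local Open Scope ring_scope.

(* The lattice M_1 = Z^3 (basis e_1,e_2,e_3 = classes of h_1,h_2,h_3);       *)
(* GL(M_1) = GL_3(Z) acting on column coordinate vectors.  The index i of     *)
(* 'I_4 stands for h_(i+1); ord_max (= 3) stands for h_4.                    *)

(* Matrix of g in S_4 acting on M_1: column j is g(e_j), which is            *)
(* e_(g j) if g j <> 4, and -e_1-e_2-e_3 otherwise.                          *)
Definition permM1 (g : 'S_4) : 'M[int]_3 :=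
  \matrix_(i < 3, j < 3)
    (if g (widen_ord (isT : 3 <= 4)%N j) == ord_max then -1
     else ((g (widen_ord (isT : 3 <= 4)%N j) : nat) == (i : nat))%:~R).

(* W_1 = image of S_4 x mu_2 in GL(M_1); sigma acts as -id. *)
Definition in_W1 (A : 'M[int]_3) : Prop :=
  exists (g : 'S_4) (s : bool), A = (-1) ^+ s *: permM1 g.

Definition in_W1A (A : 'M[int]_3) : Prop :=
  exists g : 'S_4, ~~ odd_perm g /\ A = permM1 g.

(* W is a subgroup of W_1 containing W_1^A (W_1 is finite, so a nonempty     *)
(* subset closed under products is a subgroup).                               *)
Definition W_ok (W : 'M[int]_3 -> Prop) : Prop :=
  [/\ forall A, W A -> in_W1 A,
      forall A, in_W1A A -> W A &
      forall A B, W A -> W B -> W (A *m B)].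

(* Points of T_1 = Spec C[M_1] ~ G_m^3: t = (t(e_1), t(e_2), t(e_3)) with     *)
(* nonzero coordinates.  A in GL(M_1) acts on characters, hence on points by  *)
(* t |-> t o A, i.e. (t o A)(e_j) = prod_i t(e_i)^(A i j).                   *)
Section Torus.
Variable R : realType.
Notation C := (R[i]).

Definition tpt (t : 'rV[C]_3) : bool := [forall j, t 0 j != 0].
Definition tmul (s t : 'rV[C]_3) : 'rV[C]_3 := \row_j (s 0 j * t 0 j).
Definition tinv (t : 'rV[C]_3) : 'rV[C]_3 := \row_j (t 0 j)^-1.
Definition tone : 'rV[C]_3 := const_mx 1.
Definition tact (A : 'M[int]_3) (t : 'rV[C]_3) : 'rV[C]_3 :=
  \row_j \prod_(i < 3) (t 0 i) ^ (A i j).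

Definition fin_subgroup (G : {fset 'rV[C]_3}) : Prop :=
  [/\ forall t, t \in G -> tpt t,
      tone \in G,
      forall s t, s \in G -> t \in G -> tmul s t \in G &
      forall t, t \in G -> tinv t \in G].

Definition W_invariant (W : 'M[int]_3 -> Prop) (G : {fset 'rV[C]_3}) : Prop :=
  forall A t, W A -> t \in G -> tact A t \in G.
End Torus.

(* The cyclic group mu_k, modelled as Z/kZ = 'I_k with addition mod k. *)
Lemma ord_pos k (i : 'I_k) : (0 < k)%N.
Proof. exact: leq_ltn_trans (leq0n i) (ltn_ord i). Qed.

Definition addI k (i j : 'I_k) : 'I_k :=
  Ordinal (ltn_pmod (i + j) (ord_pos i)).

Definition add3 a b c (x y : 'I_a * 'I_b * 'I_c) : 'I_a * 'I_b * 'I_c :=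
  (addI x.1.1 y.1.1, addI x.1.2 y.1.2, addI x.2 y.2).

Definition iso_mu3 (R : realType) (G : {fset 'rV[R[i]]_3}) (a b c : nat) : Prop :=
  exists f : 'rV[R[i]]_3 -> 'I_a * 'I_b * 'I_c,
    [/\ {in G &, injective f},
        (forall y, exists2 x, x \in G & f x = y) &
        {in G &, forall s t, f (tmul s t) = add3 (f s) (f t)}].

From HB Require Import structures.
From mathcomp Require Import all_boot all_order all_algebra all_fingroup.
From mathcomp Require Import finmap reals complex cyclic zify ring.

Set Implicit Arguments.
Unset Strict Implicit.
Unset Printing Implicit Defensive.
Import GRing.Theory Num.Theory.
Local Open Scope ring_scope.

(* The first coordinates of the points of G form a finite subgroup of C^*,
   hence the group of n-th roots of unity, generated by some z.  As the
   3-cycle (h_1 h_2 h_3) permutes the coordinates, every point of G is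
   (z^a1, z^a2, z^a3), and G is encoded by the lattice of its exponent vectors:
   it contains nZ^3 and some (1, p, q), and it is stable under A_4.  Such a
   lattice contains (4, 0, 0), and parity arguments show that it is
   {a | k divides a2 - a1 and a3 - a1} for k = 1, 2 or 4.  Reducing modulo n,
   G is then isomorphic to mu_n x mu_(n/k) x mu_(n/k): cases 1, 3 and 5. *)

Section FiniteMulSubgroup.
Variables (F : fieldType) (S : seq F).
Hypotheses (S_uniq : uniq S) (S_neq0 : 0 \notin S).
Hypothesis S_mul : {in S &, forall x y, x * y \in S}.
Hypothesis S_inv : {in S, forall x, x^-1 \in S}.

Lemma expr_size_mulgroup : {in S, forall z, z ^+ size S = 1}.
Proof.
move=> z Sz; have z_neq0 : z != 0 by apply: contraNneq S_neq0 => <-.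
have S_mulz : perm_eq [seq z * y | y <- S] S.
  apply: uniq_perm => //; first by rewrite map_inj_uniq //; exact: mulfI.
  move=> y; apply/mapP/idP => [[x Sx ->]|Sy]; first exact: S_mul.
  by exists (z^-1 * y); [exact: S_mul (S_inv Sz) Sy | rewrite mulVKf].
have prodS_neq0 : \prod_(y <- S) y != 0.
  by rewrite prodf_seq_neq0; apply/allP => y Sy; apply: contraNneq S_neq0 => <-.
apply: (mulIf prodS_neq0); rewrite mul1r -[RHS](perm_big _ S_mulz) big_map.
by rewrite big_split big_const_seq count_predT iter_mulr_1.
Qed.

Lemma mulgroup_cyclic : (0 < size S)%N -> exists z, [/\ z \in S,
  (size S).-primitive_root z & {in S, forall y, exists i : nat, y = z ^+ i}].
Proof.
move=> S_gt0; have /hasP[z Sz z_prim] : has (size S).-primitive_root S.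
  apply: has_prim_root => //; apply/allP => y /expr_size_mulgroup y1.
  by rewrite unity_rootE y1.
exists z; split=> // y /expr_size_mulgroup /(prim_rootP z_prim)[i ->].
by exists i.
Qed.

End FiniteMulSubgroup.

Section InvariantLattice.
Variable L : int -> int -> int -> bool.
Hypothesis L0 : L 0 0 0.
Hypothesis L_sub : forall a1 a2 a3 b1 b2 b3, L a1 a2 a3 -> L b1 b2 b3 ->
  L (a1 - b1) (a2 - b2) (a3 - b3).
(* The actions on exponent vectors of the generators (h_1 h_2 h_3) and
   (h_1 h_2)(h_3 h_4) of A_4. *)
Hypothesis L_cycle123 : forall a1 a2 a3, L a1 a2 a3 -> L a3 a1 a2.
Hypothesis L_dtransp12 : forall a1 a2 a3, L a1 a2 a3 -> L a2 a1 (- (a1 + a2 + a3)).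

Local Ltac lattice_from h := apply: (etrans _ h); congr L; lia.

Lemma L_opp a1 a2 a3 : L a1 a2 a3 -> L (- a1) (- a2) (- a3).
Proof. by move=> h; lattice_from (L_sub L0 h). Qed.

Lemma L_add a1 a2 a3 b1 b2 b3 : L a1 a2 a3 -> L b1 b2 b3 ->
  L (a1 + b1) (a2 + b2) (a3 + b3).
Proof. by move=> ha hb; lattice_from (L_sub ha (L_opp hb)). Qed.

Lemma L_scale (c : int) a1 a2 a3 : L a1 a2 a3 -> L (c * a1) (c * a2) (c * a3).
Proof.
move=> h.
have L_nat (n : nat) : L (n%:Z * a1) (n%:Z * a2) (n%:Z * a3).
  by elim: n => [|n IH]; [lattice_from L0 | lattice_from (L_add IH h)].
case: c => n; first exact: L_nat.
by lattice_from (L_opp (L_nat n.+1)).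
Qed.

Lemma L_cycle234 a1 a2 a3 : L a1 a2 a3 -> L a1 a3 (- (a1 + a2 + a3)).
Proof. by move=> h; lattice_from (L_dtransp12 (L_cycle123 h)). Qed.

Lemma L_dtransp14 a1 a2 a3 : L a1 a2 a3 -> L (- (a1 + a2 + a3)) a3 a2.
Proof.
move=> h.
by lattice_from (L_dtransp12 (L_cycle123 (L_cycle123 (L_dtransp12 (L_cycle123 h))))).
Qed.

Lemma L_scaled_Z3 m c1 c2 c3 : L m 0 0 -> L (m * c1) (m * c2) (m * c3).
Proof.
move=> h; have h2 := L_cycle123 h; have h3 := L_cycle123 h2.
by lattice_from (L_add (L_add (L_scale c1 h) (L_scale c2 h2)) (L_scale c3 h3)).
Qed.

(* Modulo 2mZ^3, which lies in L, the symmetries move any w whose entries do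
   not all have the same parity to (1, 0, 0). *)
Lemma L_parity m w1 w2 w3 : L (2 * m) 0 0 -> ~~ L m 0 0 ->
  L (m * w1) (m * w2) (m * w3) -> (2 %| w2 - w1)%Z && (2 %| w3 - w1)%Z.
Proof.
move=> L2m Lm Lw.
have odd_first c1 c2 c3 : ~~ L (m + 2 * m * c1) (2 * m * c2) (2 * m * c3).
  apply: contra Lm => h; lattice_from (L_sub h (L_scaled_Z3 c1 c2 c3 L2m)).
have E1 := divz_eq w1 2; have E2 := divz_eq w2 2; have E3 := divz_eq w3 2.
set q1 := (w1 %/ 2)%Z in E1 *; set q2 := (w2 %/ 2)%Z in E2 *.
set q3 := (w3 %/ 2)%Z in E3 *.
have R1 : (w1 %% 2)%Z = 0 \/ (w1 %% 2)%Z = 1 by lia.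
have R2 : (w2 %% 2)%Z = 0 \/ (w2 %% 2)%Z = 1 by lia.
have R3 : (w3 %% 2)%Z = 0 \/ (w3 %% 2)%Z = 1 by lia.
case: R1 => r1; case: R2 => r2; case: R3 => r3;
  try (apply/andP; split; lia); exfalso.
- by move/negP: (odd_first q3 q1 q2); apply; lattice_from (L_cycle123 Lw).
- move/negP: (odd_first q2 q3 q1); apply.
  by lattice_from (L_cycle123 (L_cycle123 Lw)).
- move/negP: (odd_first q2 q1 (- q1 - q2 - q3 - 1)); apply.
  by lattice_from (L_dtransp12 Lw).
- by move/negP: (odd_first q1 q2 q3); apply; lattice_from Lw.
- move/negP: (odd_first q1 (- q1 - q2 - q3 - 1) q2); apply.
  by lattice_from (L_cycle234 (L_cycle234 Lw)).
- move/negP: (odd_first q1 q3 (- q1 - q2 - q3 - 1)); apply.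
  by lattice_from (L_cycle234 Lw).
Qed.

Lemma L_400 p q : L 1 p q -> L 4 0 0.
Proof.
move=> Lx; have Ly : L 3 (-1) (-1).
  by lattice_from (L_add (L_add Lx (L_cycle234 Lx)) (L_cycle234 (L_cycle234 Lx))).
by lattice_from (L_sub Ly (L_dtransp14 Ly)).
Qed.

Lemma L_level p q : L 1 p q -> exists2 k : nat, k \in [:: 1; 2; 4]%N &
  L k 0 0 /\ forall a1 a2 a3, L a1 a2 a3 -> (k%:Z %| a2 - a1)%Z && (k%:Z %| a3 - a1)%Z.
Proof.
move=> Lx; have L4 := L_400 Lx.
have [L1|L1] := boolP (L 1 0 0).
  by exists 1%N => //; split=> // a1 a2 a3 _; rewrite !dvd1z.
have [L2|L2] := boolP (L 2 0 0).
  exists 2%N => //; split=> // a1 a2 a3 La.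
  by apply: (@L_parity 1); [lattice_from L2 | done | lattice_from La].
exists 4%N => //; split=> // a1 a2 a3 La.
have /andP[/dvdzP[e2 E2] /dvdzP[e3 E3]] : (2 %| a2 - a1)%Z && (2 %| a3 - a1)%Z.
  by apply: (@L_parity 2); [lattice_from L4 | done | exact: L_scale].
(* a minus its image under (h_2 h_3 h_4) is 2 (0, e2 - e3, 2 a1 + e2 + 2 e3). *)
have /andP[/dvdzP[f2 F2] /dvdzP[f3 F3]] :
    (2 %| (e2 - e3) - 0)%Z && (2 %| (2 * a1 + e2 + 2 * e3) - 0)%Z.
  apply: (@L_parity 2); [lattice_from L4 | done | ].
  by lattice_from (L_sub La (L_cycle234 La)).
apply/andP; split; apply/dvdzP; [exists (f3 - a1 - e3) | exists (f3 - a1 - e3 - f2)]; lia.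
Qed.

Lemma L_classification p q : L 1 p q -> exists2 k : nat, k \in [:: 1; 2; 4]%N &
  forall a1 a2 a3, L a1 a2 a3 = (k%:Z %| a2 - a1)%Z && (k%:Z %| a3 - a1)%Z.
Proof.
move=> Lx; have [k k124 [Lk L_dvd]] := L_level Lx.
exists k => // a1 a2 a3; apply/idP/idP; first exact: L_dvd.
have /andP[/dvdzP[c2 E2] /dvdzP[c3 E3]] := L_dvd _ _ _ Lx.
move=> /andP[/dvdzP[d2 F2] /dvdzP[d3 F3]].
have Lk' := L_scaled_Z3 0 (d2 - a1 * c2) (d3 - a1 * c3) Lk.
by lattice_from (L_add (L_scale a1 Lx) Lk').
Qed.

End InvariantLattice.

Lemma expz_congr (F : fieldType) (z : F) (n : nat) (a b : int) :
  z != 0 -> z ^+ n = 1 -> (a = b %[mod n])%Z -> z ^ a = z ^ b.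
Proof.
move=> z0 zn ab.
have expz_mod c : z ^ (c %% n)%Z = z ^ c.
  rewrite {2}(divz_eq c n) [in RHS]expfzDr // -exprz_exp exprzAC -exprnP zn.
  by rewrite exp1rz mul1r.
by rewrite -expz_mod ab expz_mod.
Qed.

Section TorusAction.
Variable R : realType.
Notation C := (R[i]).

(* [hval t i] is the value at t of the character h_(i+1), where
   h_4 = -(h_1 + h_2 + h_3) in M_1. *)
Definition hval (t : 'rV[C]_3) (i : 'I_4) : C :=
  if (i : nat) == 3%N then (t 0 0 * t 0 (inord 1) * t 0 (inord 2))^-1
  else t 0 (inord i).

Lemma tact_perm (g : 'S_4) t :
  tact (permM1 g) t = \row_j hval t (g (widen_ord (isT : (3 <= 4)%N) j)).
Proof.
apply/rowP => j; rewrite !mxE /hval.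
under eq_bigr => i _ do rewrite mxE.
move: (g _) => w; case: eqP => [->|w_neq3].
  rewrite !big_ord_recr big_ord0 /= mul1r !exprN1 !invfM.
  have -> : (inord 1 : 'I_3) = widen_ord (leqnSn _) ord_max.
    by apply/val_inj; rewrite /= inordK.
  have -> : (inord 2 : 'I_3) = ord_max by apply/val_inj; rewrite /= inordK.
  by congr (_ / _ / _); congr (_^-1); congr (t 0 _); apply/val_inj.
have w_neq3' : (w : nat) != 3%N by apply/eqP => w3; apply: w_neq3; apply/val_inj.
rewrite (negPf w_neq3') !big_ord_recr big_ord0 /= mul1r.
case: w w_neq3 w_neq3' => [[|[|[|[|m]]]] Hw] //= _ _.
all: rewrite ?expr1z ?expr0z ?mulr1 ?mul1r; congr (t 0 _).
all: by apply/val_inj; rewrite /= ?inordK.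
Qed.

Definition zpt (z : C) (a1 a2 a3 : int) : 'rV[C]_3 :=
  \row_(j < 3)
    z ^ (if (j : nat) == 0%N then a1 else if (j : nat) == 1%N then a2 else a3).

Definition cycle123 : 'S_4 := tperm (0 : 'I_4) 1 * tperm (1 : 'I_4) 2.
Definition dtransp12 : 'S_4 := tperm (0 : 'I_4) 1 * tperm (2 : 'I_4) 3.

Lemma cycle123_even : ~~ odd_perm cycle123.
Proof. by rewrite odd_permM !odd_tperm. Qed.

Lemma dtransp12_even : ~~ odd_perm dtransp12.
Proof. by rewrite odd_permM !odd_tperm. Qed.

Lemma hval_zpt_max z a1 a2 a3 : z != 0 ->
  hval (zpt z a1 a2 a3) ord_max = z ^ (- (a1 + a2 + a3)).
Proof. by move=> z0; rewrite /hval /= !mxE !inordK //= -!expfzDr // invr_expz. Qed.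

Lemma tact_cycle123_zpt z a1 a2 a3 : z != 0 ->
  tact (permM1 cycle123) (zpt z a1 a2 a3) = zpt z a3 a1 a2.
Proof.
move=> z0; rewrite tact_perm; apply/rowP => j; rewrite !mxE.
case: j => [[|[|[|m]]] Hj] //=; rewrite /cycle123 permM !permE /=.
all: rewrite /hval /= !mxE ?inordK //.
Qed.

Lemma tact_cycle123_coord0 (t : 'rV[C]_3) :
  tact (permM1 cycle123) t 0 0 = t 0 (inord 2).
Proof. by rewrite tact_perm mxE /hval /cycle123 permM !permE. Qed.

Lemma tact_cycle123_coord2 (t : 'rV[C]_3) :
  tact (permM1 cycle123) t 0 (inord 2) = t 0 (inord 1).
Proof.
rewrite tact_perm mxE (_ : widen_ord _ (inord 2) = 2 :> 'I_4); last first.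
  by apply/val_inj; rewrite /= inordK.
by rewrite /hval /cycle123 permM !permE.
Qed.

Lemma tact_dtransp12_zpt z a1 a2 a3 : z != 0 ->
  tact (permM1 dtransp12) (zpt z a1 a2 a3) = zpt z a2 a1 (- (a1 + a2 + a3)).
Proof.
move=> z0; rewrite tact_perm; apply/rowP => j; rewrite !mxE.
case: j => [[|[|[|m]]] Hj] //=; rewrite /dtransp12 permM !permE /=.
- by rewrite /hval /= !mxE ?inordK.
- by rewrite /hval /= !mxE ?inordK.
- exact: hval_zpt_max.
Qed.

Lemma zpt_mul z a1 a2 a3 b1 b2 b3 : z != 0 ->
  tmul (zpt z a1 a2 a3) (zpt z b1 b2 b3) = zpt z (a1 + b1) (a2 + b2) (a3 + b3).
Proof.
move=> z0; apply/rowP => j; rewrite !mxE.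
by case: ifP => _; [|case: ifP => _]; rewrite expfzDr.
Qed.

Lemma zpt_inv z a1 a2 a3 : tinv (zpt z a1 a2 a3) = zpt z (- a1) (- a2) (- a3).
Proof.
apply/rowP => j; rewrite !mxE.
by case: ifP => _; [|case: ifP => _]; rewrite invr_expz.
Qed.

Lemma zpt0 z : zpt z 0 0 0 = tone R.
Proof. by apply/rowP => j; rewrite !mxE !if_same expr0z. Qed.

Lemma zpt_congr z (n : nat) a1 a2 a3 b1 b2 b3 : z != 0 -> z ^+ n = 1 ->
  (a1 = b1 %[mod n])%Z -> (a2 = b2 %[mod n])%Z -> (a3 = b3 %[mod n])%Z ->
  zpt z a1 a2 a3 = zpt z b1 b2 b3.
Proof.
move=> z0 zn e1 e2 e3; apply/rowP => j; rewrite !mxE.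
by case: ifP => _; [|case: ifP => _]; exact: expz_congr z0 zn _.
Qed.

Lemma iso_mu3_of_bij (G : {fset 'rV[C]_3}) a b c
    (g : 'I_a * 'I_b * 'I_c -> 'rV[C]_3) (u0 : 'I_a * 'I_b * 'I_c) :
  injective g -> (forall u, g u \in G) -> {in G, forall t, exists u, g u = t} ->
  (forall u v, g (add3 u v) = tmul (g u) (g v)) -> iso_mu3 G a b c.
Proof.
move=> g_inj g_in g_onto g_mul.
pose f t := odflt u0 [pick u | g u == t].
have gK : cancel g f.
  move=> u; rewrite /f.
  by case: pickP => [u' /eqP /g_inj -> //|/(_ u)]; rewrite eqxx.
exists f; split.
- by move=> s t /g_onto [u <-] /g_onto [v <-]; rewrite !gK => ->.
- by move=> u; exists (g u); [exact: g_in | exact: gK].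
- by move=> s t /g_onto [u <-] /g_onto [v <-]; rewrite -g_mul !gK.
Qed.

End TorusAction.

Lemma modz_add_mulr_mod (x y k b : int) : 0 < k ->
  ((x %% (k * b))%Z + k * (y %% b)%Z = x + k * y %[mod k * b])%Z.
Proof. by move=> k_gt0; rewrite mulz_modr // modzDml modzDmr. Qed.

Lemma absz_modz (a : int) (n : nat) : (0 < n)%N -> `|(a %% n)%Z|%N%:Z = (a %% n)%Z.
Proof. by move=> n_gt0; rewrite gez0_abs // modz_ge0 // -lt0n. Qed.

Lemma absz_modz_lt (a : int) (n : nat) : (0 < n)%N -> (`|(a %% n)%Z| < n)%N.
Proof. by move=> n_gt0; rewrite -ltz_nat absz_modz // ltz_pmod. Qed.

Section LevelLattice.
Variables (R : realType) (G : {fset 'rV[R[i]]_3}) (k b : nat) (z : R[i]).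
Hypothesis k_gt0 : (0 < k)%N.
Hypothesis z_prim : (k * b).-primitive_root z.
Hypothesis G_zpt : {in G, forall t, exists a1 a2 a3, t = zpt z a1 a2 a3}.
Hypothesis G_level : forall a1 a2 a3,
  (zpt z a1 a2 a3 \in G) = (k%:Z %| a2 - a1)%Z && (k%:Z %| a3 - a1)%Z.

Let zkb : z ^+ (k * b) = 1 := prim_expr_order z_prim.
Let kb_gt0 : (0 < k * b)%N := prim_order_gt0 z_prim.
Let b_gt0 : (0 < b)%N := proj2 (andP (eqbLR (muln_gt0 k b) kb_gt0)).

Let z_neq0 : z != 0.
Proof.
apply: contra_eq_neq zkb => ->.
by rewrite expr0n gtn_eqF // eq_sym oner_eq0.
Qed.

Definition level_pt (u : 'I_(k * b) * 'I_b * 'I_b) : 'rV[R[i]]_3 :=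
  let: (i, j, l) := u in
  zpt z (i : nat)%:Z ((i : nat)%:Z + k%:Z * (j : nat)%:Z)
        ((i : nat)%:Z + k%:Z * (l : nat)%:Z).

Lemma level_pt_in u : level_pt u \in G.
Proof.
case: u => [[i j] l].
by rewrite G_level /= ![_ + _ * _ - _]addrC !addKr !dvdz_mulr.
Qed.

Lemma level_pt_inj : injective level_pt.
Proof.
have expz_inj (m m' : nat) : z ^ m%:Z = z ^ m'%:Z -> (m == m' %[mod k * b])%N.
  by rewrite -!exprnP => /eqP; rewrite (eq_prim_root_expr z_prim).
have mulk_inj (x x' : 'I_b) i : (i + k * x == i + k * x' %[mod k * b])%N -> x = x'.
  rewrite eqn_modDl -!muln_modr eqn_pmul2l // !modn_small //.
  by move/eqP/val_inj.
move=> [[i j] l] [[i' j'] l'] /rowP e.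
move: (e 0) (e (inord 1)) (e (inord 2)); rewrite !mxE !inordK //= -!PoszM -!PoszD.
move=> /expz_inj ii' /expz_inj jj' /expz_inj ll'.
rewrite !modn_small ?ltn_ord // in ii'; have {ii'} /val_inj ii' := eqP ii'.
by subst i'; rewrite (mulk_inj _ _ _ jj') (mulk_inj _ _ _ ll').
Qed.

Lemma level_pt_onto : {in G, forall t, exists u, level_pt u = t}.
Proof.
move=> t Gt; have [a1 [a2 [a3 et]]] := G_zpt Gt; subst t.
move: Gt; rewrite G_level => /andP[/dvdzP[c2 E2] /dvdzP[c3 E3]].
exists (Ordinal (absz_modz_lt a1 kb_gt0), Ordinal (absz_modz_lt c2 b_gt0),
        Ordinal (absz_modz_lt c3 b_gt0)).
apply: zpt_congr z_neq0 zkb _ _ _; rewrite /= !absz_modz // ?PoszM.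
- exact: modz_mod.
- by rewrite modz_add_mulr_mod // mulrC -E2 addrC subrK.
- by rewrite modz_add_mulr_mod // mulrC -E3 addrC subrK.
Qed.

Lemma level_pt_mul u v : level_pt (add3 u v) = tmul (level_pt u) (level_pt v).
Proof.
case: u v => [[i j] l] [[i' j'] l']; rewrite /= zpt_mul //.
apply: zpt_congr z_neq0 zkb _ _ _; rewrite -!modz_nat !PoszD !PoszM.
- exact: modz_mod.
- by rewrite modz_add_mulr_mod //; congr modz; ring.
- by rewrite modz_add_mulr_mod //; congr modz; ring.
Qed.

Lemma iso_mu3_level : iso_mu3 G (k * b) b b.
Proof.
apply: (iso_mu3_of_bij (g := level_pt) (Ordinal kb_gt0, Ordinal b_gt0, Ordinal b_gt0)).
- exact: level_pt_inj.
- exact: level_pt_in.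
- exact: level_pt_onto.
- exact: level_pt_mul.
Qed.

End LevelLattice.

Section InvariantSubgroup.
Variables (R : realType) (G : {fset 'rV[R[i]]_3}).
Hypothesis G_tpt : forall t, t \in G -> tpt t.
Hypothesis G1 : tone R \in G.
Hypothesis G_mul : forall s t, s \in G -> t \in G -> tmul s t \in G.
Hypothesis G_inv : forall t, t \in G -> tinv t \in G.
Hypothesis G_cycle123 : forall t, t \in G -> tact (permM1 cycle123) t \in G.
Hypothesis G_dtransp12 : forall t, t \in G -> tact (permM1 dtransp12) t \in G.

Definition coord0 : seq R[i] :=
  undup [seq t 0 0 | t : 'rV[R[i]]_3 <- enum_fset G].

Lemma coord0P y : reflect (exists2 t, t \in G & y = t 0 0) (y \in coord0).
Proof. by rewrite mem_undup; apply: (iffP mapP) => -[t Gt ->]; exists t. Qed.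

Lemma coord0_neq0 y : y \in coord0 -> y != 0.
Proof. by move=> /coord0P[t /G_tpt /forallP /(_ 0) + ->]. Qed.

Lemma coord_in_coord0 t j : t \in G -> t 0 j \in coord0.
Proof.
move=> Gt; apply/coord0P.
case: j => [[|[|[|//]]] j_lt3].
- by exists t; last by congr (t 0 _); apply/val_inj.
- exists (tact (permM1 cycle123) (tact (permM1 cycle123) t)).
    by apply/G_cycle123/G_cycle123.
  rewrite tact_cycle123_coord0 tact_cycle123_coord2; congr (t 0 _).
  by apply/val_inj; rewrite /= inordK.
- exists (tact (permM1 cycle123) t); first exact: G_cycle123.
  by rewrite tact_cycle123_coord0; congr (t 0 _); apply/val_inj; rewrite /= inordK.
Qed.

Lemma coord0_cyclic : exists z, [/\ z \in coord0, (size coord0).-primitive_root z &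
  {in coord0, forall y, exists i : nat, y = z ^+ i}].
Proof.
apply: mulgroup_cyclic; first exact: undup_uniq.
- by apply/negP => /coord0_neq0; rewrite eqxx.
- move=> _ _ /coord0P[s Gs ->] /coord0P[t Gt ->].
  by apply/coord0P; exists (tmul s t); [exact: G_mul | rewrite mxE].
- move=> _ /coord0P[t Gt ->].
  by apply/coord0P; exists (tinv t); [exact: G_inv | rewrite mxE].
have one_in : 1 \in coord0 by apply/coord0P; exists (tone R); rewrite ?mxE.
by move: one_in; case: coord0.
Qed.

Section Generator.
Variable z : R[i].
Hypothesis z_coord0 : z \in coord0.
Hypothesis z_gen : {in coord0, forall y, exists i : nat, y = z ^+ i}.

Let z_neq0 : z != 0 := coord0_neq0 z_coord0.

Lemma G_zpt : {in G, forall t, exists a1 a2 a3 : int, t = zpt z a1 a2 a3}.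
Proof.
move=> t Gt.
have [i1 e1] := z_gen (coord_in_coord0 0 Gt).
have [i2 e2] := z_gen (coord_in_coord0 (inord 1) Gt).
have [i3 e3] := z_gen (coord_in_coord0 (inord 2) Gt).
exists i1, i2, i3; apply/rowP => j; rewrite mxE.
case: j => [[|[|[|//]]] j_lt3] /=; rewrite -exprnP.
- by rewrite -e1; congr (t 0 _); apply/val_inj.
- by rewrite -e2; congr (t 0 _); apply/val_inj; rewrite /= inordK.
- by rewrite -e3; congr (t 0 _); apply/val_inj; rewrite /= inordK.
Qed.

Lemma zpt_1pq_in : exists p q, zpt z 1 p q \in G.
Proof.
have [t Gt zt] := coord0P _ z_coord0; have [a1 [a2 [a3 et]]] := G_zpt Gt.
exists a2, a3; suff -> : zpt z 1 a2 a3 = t by [].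
apply/rowP => j; rewrite {1}et !mxE.
by case: ifP => // _; rewrite expr1z {1}zt et mxE.
Qed.

Lemma G_level : exists2 k : nat, k \in [:: 1; 2; 4]%N & forall a1 a2 a3,
  (zpt z a1 a2 a3 \in G) = (k%:Z %| a2 - a1)%Z && (k%:Z %| a3 - a1)%Z.
Proof.
have [p [q Gx]] := zpt_1pq_in.
apply: (L_classification (L := fun a1 a2 a3 => zpt z a1 a2 a3 \in G) _ _ _ _ Gx).
- by rewrite zpt0.
- move=> a1 a2 a3 b1 b2 b3 Ga Gb.
  by rewrite -zpt_mul // -zpt_inv; exact: G_mul (G_inv Gb).
- by move=> a1 a2 a3 Ga; rewrite -tact_cycle123_zpt //; exact: G_cycle123.
- by move=> a1 a2 a3 Ga; rewrite -tact_dtransp12_zpt //; exact: G_dtransp12.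
Qed.

End Generator.

Lemma invariant_subgroup_iso : exists2 k : nat, k \in [:: 1; 2; 4]%N &
  exists n, (k %| n)%N /\ iso_mu3 G n (n %/ k) (n %/ k).
Proof.
have [z [z_coord0 z_prim z_gen]] := coord0_cyclic.
have [k k124 G_lvl] := G_level z_coord0 z_gen.
set n := size coord0 in z_prim *.
have k_gt0 : (0 < k)%N by move: k124; rewrite !inE => /or3P[] /eqP ->.
have z_neq0 := coord0_neq0 z_coord0.
have k_dvd_n : (k %| n)%N.
  have : zpt z n 0 0 \in G.
    have zn := prim_expr_order z_prim.
    by rewrite (@zpt_congr _ z n n 0 0 0 0 0 z_neq0 zn) ?zpt0 ?modzz ?mod0z.
  by rewrite G_lvl dvdzE sub0r abszN => /andP[].
have nE : n = (k * (n %/ k))%N by rewrite mulnC divnK.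
exists k => //; exists n; split => //.
rewrite {1}nE; apply: (iso_mu3_level (z := z)) => //; first by rewrite -nE.
exact: G_zpt z_gen.
Qed.

End InvariantSubgroup.

Theorem corollary7p2 (R : realType) (W : 'M[int]_3 -> Prop)
    (G : {fset 'rV[R[i]]_3}) :
  W_ok W -> fin_subgroup G -> W_invariant W G ->
  exists n : nat,
       iso_mu3 G n n n
    \/ ((2 %| n)%N /\ iso_mu3 G n n (n %/ 2))
    \/ ((2 %| n)%N /\ iso_mu3 G n (n %/ 2) (n %/ 2))
    \/ ((4 %| n)%N /\ iso_mu3 G n (n %/ 2) (n %/ 4))
    \/ ((4 %| n)%N /\ iso_mu3 G n (n %/ 4) (n %/ 4)).
Proof.
move=> [_ W_A4 _] [G_tpt G1 G_mul G_inv] G_W.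
have G_even g : ~~ odd_perm g -> forall t, t \in G -> tact (permM1 g) t \in G.
  by move=> g_even t; apply: G_W; apply: W_A4; exists g.
have [k k124 [n [k_dvd_n iso]]] := invariant_subgroup_iso G_tpt G1 G_mul G_inv
  (G_even _ cycle123_even) (G_even _ dtransp12_even).
exists n; move: k124 k_dvd_n iso; rewrite !inE => /or3P[] /eqP ->.
- by rewrite divn1; left.
- by right; right; left.
- by right; right; right; right.
Qed.
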